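(* Let $\mathcal{C}=(\mathbf{C},\otimes,a,\mathcal{T})$ be a braided semigroupal category in which $\mathbf{C}$ is an additive category with pullbacks. Then the category $\mathbf{Lie}(\mathcal{C})$ of Lie objects has pullbacks. Specifically, given Lie morphisms $f\colon(A,\mu_A)\to(C,\mu_C)$ and $g\colon(B,\mu_B)\to(C,\mu_C)$, let $(A\times_CB,\pi_A,\pi_B)$ be their pullback in $\mathbf{C}$ and let $\mu_{A\times_CB}\colon(A\times_CB)\otimes(A\times_CB)\to A\times_CB$ be the unique morphism with $\pi_X\circ\mu_{A\times_CB}=\mu_X\circ(\pi_X\otimes\pi_X)$ for $X\in\{A,B\}$ (which exists). Then $((A\times_CB,\mu_{A\times_CB}),\pi_A,\pi_B)$ is a pullback of $f$ and $g$ in $\mathbf{Lie}(\mathcal{C})$.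
   Context: $a$ denotes the associativity natural isomorphism $a_{X,Y,Z}\colon(X\otimes Y)\otimes Z\to X\otimes(Y\otimes Z)$ and $\mathcal{T}_{X,Y}\colon X\otimes Y\to Y\otimes X$ the braiding natural isomorphism. A Lie object in $\mathcal{C}$ is a pair $(A,\mu)$ with $\mu\colon A\otimes A\to A$ such that $0=\mu\circ\mathcal{T}_{A,A}+\mu$ and $0=\mu\circ(\mathrm{Id}_A\otimes\mu)\circ a_{A,A,A}+\mu\circ(\mu\otimes\mathrm{Id}_A)\circ a^{-1}_{A,A,A}\circ(\mathrm{Id}_A\otimes\mathcal{T}_{A,A})\circ a_{A,A,A}-\mu\circ(\mu\otimes\mathrm{Id}_A)$. A Lie morphism $f\colon(A,\mu)\to(B,\eta)$ is a morphism $f\colon A\to B$ with $f\circ\mu=\eta\circ(f\otimes f)$. $\mathbf{Lie}(\mathcal{C})$ is the category of Lie objects and Lie morphisms. *)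

From Stdlib Require Import ProofIrrelevance.

Set Implicit Arguments.
Unset Strict Implicit.

Record Category := {
  Ob :> Type;
  Hom : Ob -> Ob -> Type;
  idm : forall X : Ob, Hom X X;
  comp : forall X Y Z : Ob, Hom Y Z -> Hom X Y -> Hom X Z;
  comp_idl : forall (X Y : Ob) (f : Hom X Y), comp (idm Y) f = f;
  comp_idr : forall (X Y : Ob) (f : Hom X Y), comp f (idm X) = f;
  comp_assoc : forall (W X Y Z : Ob) (h : Hom Y Z) (g : Hom X Y) (f : Hom W X),
      comp h (comp g f) = comp (comp h g) f
}.
Arguments Hom {C} X Y : rename.
Arguments idm {C} X : rename.
Arguments comp {C X Y Z} g f : rename.

Notation "g ∘ f" := (comp g f) (at level 40, left associativity).

Definition is_pullback (C : Category) (A B Z P : C)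
    (f : Hom A Z) (g : Hom B Z) (pA : Hom P A) (pB : Hom P B) : Prop :=
  f ∘ pA = g ∘ pB /\
  forall (D : C) (h : Hom D A) (k : Hom D B), f ∘ h = g ∘ k ->
    exists! u : Hom D P, pA ∘ u = h /\ pB ∘ u = k.

Definition has_pullbacks (C : Category) : Prop :=
  forall (A B Z : C) (f : Hom A Z) (g : Hom B Z),
    exists (P : C) (pA : Hom P A) (pB : Hom P B), is_pullback f g pA pB.

Record Preadditive (C : Category) := {
  hzero : forall X Y : C, Hom X Y;
  hadd : forall X Y : C, Hom X Y -> Hom X Y -> Hom X Y;
  hopp : forall X Y : C, Hom X Y -> Hom X Y;
  hadd_assoc : forall (X Y : C) (f g h : Hom X Y),
      hadd f (hadd g h) = hadd (hadd f g) h;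
  hadd_comm : forall (X Y : C) (f g : Hom X Y), hadd f g = hadd g f;
  hadd_0l : forall (X Y : C) (f : Hom X Y), hadd (hzero X Y) f = f;
  hadd_oppl : forall (X Y : C) (f : Hom X Y), hadd (hopp f) f = hzero X Y;
  comp_haddl : forall (X Y Z : C) (g g' : Hom Y Z) (f : Hom X Y),
      (hadd g g') ∘ f = hadd (g ∘ f) (g' ∘ f);
  comp_haddr : forall (X Y Z : C) (g : Hom Y Z) (f f' : Hom X Y),
      g ∘ (hadd f f') = hadd (g ∘ f) (g ∘ f')
}.
Arguments hzero {C} p X Y : rename.
Arguments hadd {C} p {X Y} f g : rename.
Arguments hopp {C} p {X Y} f : rename.

Definition is_zero_object (C : Category) (O : C) : Prop :=
  (forall X : C, exists! u : Hom O X, True) /\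
  (forall X : C, exists! u : Hom X O, True).

Definition is_biproduct (C : Category) (p : Preadditive C) (X Y S : C)
    (i1 : Hom X S) (i2 : Hom Y S) (p1 : Hom S X) (p2 : Hom S Y) : Prop :=
  p1 ∘ i1 = idm X /\ p2 ∘ i2 = idm Y /\
  p1 ∘ i2 = hzero p Y X /\ p2 ∘ i1 = hzero p X Y /\
  hadd p (i1 ∘ p1) (i2 ∘ p2) = idm S.

Record AdditiveCategory := {
  acat :> Category;
  apre : Preadditive acat;
  a_zero_object : exists O : acat, is_zero_object O;
  a_biproducts : forall X Y : acat, exists (S : acat) (i1 : Hom X S) (i2 : Hom Y S)
      (p1 : Hom S X) (p2 : Hom S Y), is_biproduct apre i1 i2 p1 p2
}.

Record BraidedSemigroupal (C : Category) := {
  tob : C -> C -> C;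
  thom : forall (X X' Y Y' : C), Hom X X' -> Hom Y Y' -> Hom (tob X Y) (tob X' Y');
  thom_id : forall X Y : C, thom (idm X) (idm Y) = idm (tob X Y);
  thom_comp : forall (X X' X'' Y Y' Y'' : C) (f' : Hom X' X'') (f : Hom X X')
      (g' : Hom Y' Y'') (g : Hom Y Y'),
      thom (f' ∘ f) (g' ∘ g) = thom f' g' ∘ thom f g;
  assoc : forall X Y Z : C, Hom (tob (tob X Y) Z) (tob X (tob Y Z));
  assoc_inv : forall X Y Z : C, Hom (tob X (tob Y Z)) (tob (tob X Y) Z);
  assoc_invK : forall X Y Z : C, assoc_inv X Y Z ∘ assoc X Y Z = idm _;
  assocK_inv : forall X Y Z : C, assoc X Y Z ∘ assoc_inv X Y Z = idm _;
  assoc_nat : forall (X X' Y Y' Z Z' : C) (f : Hom X X') (g : Hom Y Y') (h : Hom Z Z'),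
      assoc X' Y' Z' ∘ thom (thom f g) h = thom f (thom g h) ∘ assoc X Y Z;
  pentagon : forall W X Y Z : C,
      assoc W X (tob Y Z) ∘ assoc (tob W X) Y Z =
      thom (idm W) (assoc X Y Z) ∘ assoc W (tob X Y) Z ∘ thom (assoc W X Y) (idm Z);
  braid : forall X Y : C, Hom (tob X Y) (tob Y X);
  braid_inv : forall X Y : C, Hom (tob Y X) (tob X Y);
  braid_invK : forall X Y : C, braid_inv X Y ∘ braid X Y = idm _;
  braidK_inv : forall X Y : C, braid X Y ∘ braid_inv X Y = idm _;
  braid_nat : forall (X X' Y Y' : C) (f : Hom X X') (g : Hom Y Y'),
      braid X' Y' ∘ thom f g = thom g f ∘ braid X Y;
  hexagon1 : forall X Y Z : C,
      assoc Y Z X ∘ braid X (tob Y Z) ∘ assoc X Y Z =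
      thom (idm Y) (braid X Z) ∘ assoc Y X Z ∘ thom (braid X Y) (idm Z);
  hexagon2 : forall X Y Z : C,
      assoc_inv Z X Y ∘ braid (tob X Y) Z ∘ assoc_inv X Y Z =
      thom (braid X Z) (idm Y) ∘ assoc_inv X Z Y ∘ thom (idm X) (braid Y Z)
}.
Arguments tob {C} M X Y : rename.
Arguments thom {C} M {X X' Y Y'} f g : rename.
Arguments assoc {C} M X Y Z : rename.
Arguments assoc_inv {C} M X Y Z : rename.
Arguments braid {C} M X Y : rename.

Section Lie.
Variables (C : AdditiveCategory) (M : BraidedSemigroupal C).

Local Notation "X ⊗ Y" := (tob M X Y) (at level 30).
Local Notation "f ⊗h g" := (thom M f g) (at level 30).
Local Notation "0" := (hzero (apre C) _ _).
Local Notation "f + g" := (hadd (apre C) f g).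
Local Notation "f - g" := (hadd (apre C) f (hopp (apre C) g)).

Definition is_Lie (A : C) (mu : Hom (A ⊗ A) A) : Prop :=
  0 = mu ∘ braid M A A + mu /\
  0 = mu ∘ (idm A ⊗h mu) ∘ assoc M A A A
      + mu ∘ (mu ⊗h idm A) ∘ assoc_inv M A A A ∘ (idm A ⊗h braid M A A) ∘ assoc M A A A
      - mu ∘ (mu ⊗h idm A).

Definition is_Lie_morphism (A B : C) (muA : Hom (A ⊗ A) A) (muB : Hom (B ⊗ B) B)
    (f : Hom A B) : Prop :=
  f ∘ muA = muB ∘ (f ⊗h f).

Record LieObj := mkLieObj {
  lob : C;
  lmu : Hom (lob ⊗ lob) lob;
  lie_ax : is_Lie lmu
}.

Definition LieHom (A B : LieObj) : Type :=
  { f : Hom (lob A) (lob B) | is_Lie_morphism (lmu A) (lmu B) f }.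

Lemma Lie_id_mor (A : LieObj) : is_Lie_morphism (lmu A) (lmu A) (idm (lob A)).
Proof.
  unfold is_Lie_morphism. rewrite thom_id, comp_idl, comp_idr. reflexivity.
Qed.

Lemma Lie_comp_mor (A B D : LieObj) (g : LieHom B D) (f : LieHom A B) :
  is_Lie_morphism (lmu A) (lmu D) (proj1_sig g ∘ proj1_sig f).
Proof.
  destruct g as [g Hg], f as [f Hf]; unfold is_Lie_morphism in *; simpl.
  rewrite <- comp_assoc, Hf, comp_assoc, Hg, <- comp_assoc, <- thom_comp.
  reflexivity.
Qed.

Definition Lie_idm (A : LieObj) : LieHom A A := exist _ _ (Lie_id_mor A).
Definition Lie_comp (A B D : LieObj) (g : LieHom B D) (f : LieHom A B) : LieHom A D :=
  exist _ _ (Lie_comp_mor g f).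

Lemma LieHom_eq (A B : LieObj) (f g : LieHom A B) :
  proj1_sig f = proj1_sig g -> f = g.
Proof.
  destruct f as [f Hf], g as [g Hg]; simpl; intros ->.
  f_equal; apply proof_irrelevance.
Qed.

Definition LieCat : Category.
Proof.
  refine {| Ob := LieObj; Hom := LieHom; idm := Lie_idm; comp := Lie_comp |}.
  - intros X Y f; apply LieHom_eq; simpl; apply comp_idl.
  - intros X Y f; apply LieHom_eq; simpl; apply comp_idr.
  - intros W X Y Z h g f; apply LieHom_eq; simpl; apply comp_assoc.
Defined.

End Lie.
Arguments mkLieObj {C M} lob lmu lie_ax.
Arguments lob {C M} l.
Arguments lmu {C M} l.


Set Implicit Arguments.
Unset Strict Implicit.

(* Both Lie axioms say that a morphism built naturally out of the bracket
   vanishes, and a bracket-preserving morphism p intertwines these morphisms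
   for its source and target: composing the defect of the source with p gives
   the defect of the target precomposed with p ⊗ p (resp. (p ⊗ p) ⊗ p).  The
   projections of a pullback are jointly monic, so a bracket on the pullback
   that both projections preserve inherits the Lie axioms from A and B, and a
   morphism into the pullback preserves brackets as soon as its two composites
   with the projections do. *)

Section PreadditiveTheory.
Variables (C : Category) (pr : Preadditive C).

Lemma hadd_idem_eq0 (X Y : C) (x : Hom X Y) : hadd pr x x = x -> x = hzero pr X Y.
Proof.
  intro Hxx. rewrite <- (hadd_oppl pr x).
  transitivity (hadd pr (hopp pr x) (hadd pr x x)).
  - rewrite hadd_assoc, hadd_oppl, hadd_0l. reflexivity.
  - rewrite Hxx. reflexivity.
Qed.

Lemma hadd_eq0_hopp (X Y : C) (a b : Hom X Y) : hadd pr a b = hzero pr X Y -> a = hopp pr b.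
Proof.
  intro Hab. rewrite <- (hadd_0l pr a), <- (hadd_oppl pr b), <- hadd_assoc,
    (hadd_comm pr b a), Hab, hadd_comm, hadd_0l. reflexivity.
Qed.

Section AdditiveMap.
Variables (X Y X' Y' : C) (F : Hom X Y -> Hom X' Y').
Hypothesis F_hadd : forall a b, F (hadd pr a b) = hadd pr (F a) (F b).

Lemma additive_hzero : F (hzero pr X Y) = hzero pr X' Y'.
Proof. apply hadd_idem_eq0. rewrite <- F_hadd, hadd_0l. reflexivity. Qed.

Lemma additive_hopp (a : Hom X Y) : F (hopp pr a) = hopp pr (F a).
Proof. apply hadd_eq0_hopp. rewrite <- F_hadd, hadd_oppl. exact additive_hzero. Qed.

End AdditiveMap.

Lemma comp_hzeror (X Y Z : C) (g : Hom Y Z) : g ∘ hzero pr X Y = hzero pr X Z.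
Proof. apply (@additive_hzero _ _ _ _ (fun x => g ∘ x)). intros; apply comp_haddr. Qed.

Lemma comp_hzerol (X Y Z : C) (f : Hom X Y) : hzero pr Y Z ∘ f = hzero pr X Z.
Proof. apply (@additive_hzero _ _ _ _ (fun x => x ∘ f)). intros; apply comp_haddl. Qed.

Lemma comp_hoppr (X Y Z : C) (g : Hom Y Z) (f : Hom X Y) :
  g ∘ hopp pr f = hopp pr (g ∘ f).
Proof. apply (@additive_hopp _ _ _ _ (fun x => g ∘ x)). intros; apply comp_haddr. Qed.

Lemma comp_hoppl (X Y Z : C) (g : Hom Y Z) (f : Hom X Y) :
  hopp pr g ∘ f = hopp pr (g ∘ f).
Proof. apply (@additive_hopp _ _ _ _ (fun x => x ∘ f)). intros; apply comp_haddl. Qed.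

End PreadditiveTheory.

Definition jointly_monic (C : Category) (P A B : C) (pA : Hom P A) (pB : Hom P B) : Prop :=
  forall (D : C) (u v : Hom D P), pA ∘ u = pA ∘ v -> pB ∘ u = pB ∘ v -> u = v.

Lemma pullback_jointly_monic (C : Category) (A B Z P : C) (f : Hom A Z) (g : Hom B Z)
  (pA : Hom P A) (pB : Hom P B) :
  is_pullback f g pA pB -> jointly_monic pA pB.
Proof.
  intros [Hsq Huniv] D u v Eu Ev.
  destruct (Huniv D (pA ∘ v) (pB ∘ v)) as [w [_ Hw]].
  { rewrite !comp_assoc, Hsq. reflexivity. }
  rewrite <- (Hw u), (Hw v); auto.
Qed.

Lemma jointly_monic_eq0 (C : Category) (pr : Preadditive C) (P A B D : C)
  (pA : Hom P A) (pB : Hom P B) (x : Hom D P) :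
  jointly_monic pA pB -> pA ∘ x = hzero pr D A -> pB ∘ x = hzero pr D B ->
  x = hzero pr D P.
Proof.
  intros Hmono EA EB. apply Hmono; rewrite comp_hzeror; assumption.
Qed.

Section BraidedSemigroupalTheory.
Variables (C : Category) (M : BraidedSemigroupal C).

Local Notation "f ⊗h g" := (thom M f g) (at level 30).

Lemma assoc_inv_nat (X X' Y Y' Z Z' : C) (f : Hom X X') (g : Hom Y Y') (h : Hom Z Z') :
  assoc_inv M X' Y' Z' ∘ (f ⊗h (g ⊗h h)) = ((f ⊗h g) ⊗h h) ∘ assoc_inv M X Y Z.
Proof.
  rewrite <- (comp_idr (assoc_inv M X' Y' Z' ∘ _)), <- (assocK_inv M X Y Z), !comp_assoc.
  rewrite <- (comp_assoc (assoc_inv M X' Y' Z')), <- assoc_nat, !comp_assoc, assoc_invK, comp_idl.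
  reflexivity.
Qed.

Lemma thom_id_braid_nat (X X' Y Y' Z Z' : C) (f : Hom X X') (g : Hom Y Y') (h : Hom Z Z') :
  (idm X' ⊗h braid M Y' Z') ∘ (f ⊗h (g ⊗h h)) = (f ⊗h (h ⊗h g)) ∘ (idm X ⊗h braid M Y Z).
Proof. rewrite <- !thom_comp, braid_nat, comp_idl, comp_idr. reflexivity. Qed.

End BraidedSemigroupalTheory.

Section LiePullback.
Variables (C : AdditiveCategory) (M : BraidedSemigroupal C).

Local Notation "X ⊗ Y" := (tob M X Y) (at level 30).
Local Notation "f ⊗h g" := (thom M f g) (at level 30).
Local Notation "0" := (hzero (apre C) _ _).
Local Notation "f + g" := (hadd (apre C) f g).
Local Notation "- f" := (hopp (apre C) f).

Definition antisym_defect (X : C) (mu : Hom (X ⊗ X) X) : Hom (X ⊗ X) X :=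
  mu ∘ braid M X X + mu.

Definition jacobi_defect (X : C) (mu : Hom (X ⊗ X) X) : Hom ((X ⊗ X) ⊗ X) X :=
  mu ∘ (idm X ⊗h mu) ∘ assoc M X X X
  + mu ∘ (mu ⊗h idm X) ∘ assoc_inv M X X X ∘ (idm X ⊗h braid M X X) ∘ assoc M X X X
  + - (mu ∘ (mu ⊗h idm X)).

Lemma is_LieE (X : C) (mu : Hom (X ⊗ X) X) :
  is_Lie mu <-> 0 = antisym_defect mu /\ 0 = jacobi_defect mu.
Proof. unfold is_Lie, antisym_defect, jacobi_defect. split; intro H; exact H. Qed.

Section BracketPreserving.
Variables (X Y : C) (muX : Hom (X ⊗ X) X) (muY : Hom (Y ⊗ Y) Y) (p : Hom X Y).
Hypothesis p_mor : is_Lie_morphism muX muY p.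

Lemma antisym_defect_mor : p ∘ antisym_defect muX = antisym_defect muY ∘ (p ⊗h p).
Proof.
  unfold antisym_defect. rewrite comp_haddr, comp_haddl, p_mor, comp_assoc, p_mor.
  rewrite <- !comp_assoc, braid_nat. reflexivity.
Qed.

Lemma bracket_mor_l :
  p ∘ muX ∘ (muX ⊗h idm X) = muY ∘ (muY ⊗h idm Y) ∘ ((p ⊗h p) ⊗h p).
Proof.
  rewrite p_mor, <- !comp_assoc, <- !thom_comp, p_mor, comp_idl, comp_idr. reflexivity.
Qed.

Lemma bracket_mor_r :
  p ∘ muX ∘ (idm X ⊗h muX) = muY ∘ (idm Y ⊗h muY) ∘ (p ⊗h (p ⊗h p)).
Proof.
  rewrite p_mor, <- !comp_assoc, <- !thom_comp, p_mor, comp_idl, comp_idr. reflexivity.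
Qed.

Lemma jacobi_defect_mor :
  p ∘ jacobi_defect muX = jacobi_defect muY ∘ ((p ⊗h p) ⊗h p).
Proof.
  unfold jacobi_defect. rewrite !comp_haddr, !comp_haddl, comp_hoppr, comp_hoppl.
  f_equal; [f_equal | f_equal].
  - rewrite !comp_assoc, bracket_mor_r, <- !comp_assoc, assoc_nat. reflexivity.
  - rewrite <- !comp_assoc, assoc_nat, (comp_assoc (idm Y ⊗h _)), thom_id_braid_nat.
    rewrite <- comp_assoc, (comp_assoc (assoc_inv M Y Y Y)), assoc_inv_nat.
    rewrite !comp_assoc, <- bracket_mor_l. reflexivity.
  - rewrite comp_assoc. apply bracket_mor_l.
Qed.

End BracketPreserving.

Lemma is_Lie_jointly_monic (P A B : C) (muP : Hom (P ⊗ P) P)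
  (muA : Hom (A ⊗ A) A) (muB : Hom (B ⊗ B) B) (pA : Hom P A) (pB : Hom P B) :
  jointly_monic pA pB -> is_Lie muA -> is_Lie muB ->
  is_Lie_morphism muP muA pA -> is_Lie_morphism muP muB pB -> is_Lie muP.
Proof.
  intros Hmono LA LB HA HB.
  destruct (proj1 (is_LieE _) LA) as [SA JA], (proj1 (is_LieE _) LB) as [SB JB].
  apply is_LieE. split; symmetry; apply (jointly_monic_eq0 (pr := apre C) Hmono).
  - rewrite (antisym_defect_mor HA), <- SA. apply comp_hzerol.
  - rewrite (antisym_defect_mor HB), <- SB. apply comp_hzerol.
  - rewrite (jacobi_defect_mor HA), <- JA. apply comp_hzerol.
  - rewrite (jacobi_defect_mor HB), <- JB. apply comp_hzerol.
Qed.

Lemma is_Lie_morphism_jointly_monic (D P A B : C) (muD : Hom (D ⊗ D) D)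
  (muP : Hom (P ⊗ P) P) (muA : Hom (A ⊗ A) A) (muB : Hom (B ⊗ B) B)
  (pA : Hom P A) (pB : Hom P B) (u : Hom D P) :
  jointly_monic pA pB ->
  is_Lie_morphism muP muA pA -> is_Lie_morphism muP muB pB ->
  is_Lie_morphism muD muA (pA ∘ u) -> is_Lie_morphism muD muB (pB ∘ u) ->
  is_Lie_morphism muD muP u.
Proof.
  unfold is_Lie_morphism. intros Hmono HA HB HuA HuB. apply Hmono.
  - rewrite comp_assoc, HuA, comp_assoc, HA, thom_comp, comp_assoc. reflexivity.
  - rewrite comp_assoc, HuB, comp_assoc, HB, thom_comp, comp_assoc. reflexivity.
Qed.

Lemma pullback_bracket_exists (A B Z P : C) (muA : Hom (A ⊗ A) A)
  (muB : Hom (B ⊗ B) B) (muZ : Hom (Z ⊗ Z) Z) (f : Hom A Z) (g : Hom B Z)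
  (pA : Hom P A) (pB : Hom P B) :
  is_Lie_morphism muA muZ f -> is_Lie_morphism muB muZ g -> is_pullback f g pA pB ->
  exists muP : Hom (P ⊗ P) P, pA ∘ muP = muA ∘ (pA ⊗h pA) /\ pB ∘ muP = muB ∘ (pB ⊗h pB).
Proof.
  intros Hf Hg [Hsq Huniv].
  destruct (Huniv _ (muA ∘ (pA ⊗h pA)) (muB ∘ (pB ⊗h pB))) as [muP [HmuP _]].
  - rewrite !comp_assoc, Hf, Hg, <- !comp_assoc, <- !thom_comp, Hsq. reflexivity.
  - exists muP. exact HmuP.
Qed.

Lemma Lie_pullback (A B Z P : LieObj M) (f : LieHom A Z) (g : LieHom B Z)
  (pA : LieHom P A) (pB : LieHom P B) :
  is_pullback (proj1_sig f) (proj1_sig g) (proj1_sig pA) (proj1_sig pB) ->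
  @is_pullback (LieCat M) A B Z P f g pA pB.
Proof.
  intros Hpb. pose proof (pullback_jointly_monic Hpb) as Hmono.
  destruct Hpb as [Hsq Huniv]. split.
  - apply LieHom_eq. exact Hsq.
  - intros D h k Hhk.
    destruct (Huniv _ (proj1_sig h) (proj1_sig k) (f_equal (@proj1_sig _ _) Hhk))
      as [u [[Hu1 Hu2] Hu_uniq]].
    assert (u_mor : is_Lie_morphism (lmu D) (lmu P) u).
    { apply (is_Lie_morphism_jointly_monic Hmono (proj2_sig pA) (proj2_sig pB)).
      - rewrite Hu1. exact (proj2_sig h).
      - rewrite Hu2. exact (proj2_sig k). }
    exists (exist _ u u_mor). split.
    + split; apply LieHom_eq; assumption.
    + intros u' [E1 E2]. apply LieHom_eq, Hu_uniq.
      split; [exact (f_equal (@proj1_sig _ _) E1) | exact (f_equal (@proj1_sig _ _) E2)].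
Qed.

End LiePullback.

Theorem mainTheorem7 (C : AdditiveCategory) (M : BraidedSemigroupal C)
  (HC : has_pullbacks C)
  (A B Z : LieObj M) (f : @Hom (LieCat M) A Z) (g : @Hom (LieCat M) B Z)
  (P : C) (pA : Hom P (lob A)) (pB : Hom P (lob B))
  (Hpb : is_pullback (proj1_sig f) (proj1_sig g) pA pB) :
  (exists muP : Hom (tob M P P) P,
      pA ∘ muP = lmu A ∘ thom M pA pA /\ pB ∘ muP = lmu B ∘ thom M pB pB) /\
  (forall muP : Hom (tob M P P) P,
      pA ∘ muP = lmu A ∘ thom M pA pA -> pB ∘ muP = lmu B ∘ thom M pB pB ->
      exists (HL : is_Lie (M:=M) muP)
             (HA : is_Lie_morphism (M:=M) muP (lmu A) pA)
             (HB : is_Lie_morphism (M:=M) muP (lmu B) pB),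
        @is_pullback (LieCat M) A B Z (mkLieObj P muP HL) f g
          (exist _ pA HA : @Hom (LieCat M) (mkLieObj P muP HL) A)
          (exist _ pB HB : @Hom (LieCat M) (mkLieObj P muP HL) B)).
Proof.
  split.
  - exact (pullback_bracket_exists (proj2_sig f) (proj2_sig g) Hpb).
  - intros muP HA HB.
    pose proof (is_Lie_jointly_monic (pullback_jointly_monic Hpb) (lie_ax A) (lie_ax B) HA HB)
      as HL.
    exists HL, HA, HB. apply Lie_pullback. exact Hpb.
Qed.
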